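(* Let $p>5$ be a prime and $k$ a positive integer with $k<p/4$. Set $D=\left\lceil \frac{2kp}{p-3}\right\rceil$. Then $D<p$, and for any $D$-APs $A_1,\dots,A_k\subseteq\mathbb{Z}_p$ we have $\big|\sum_{i=1}^k A_i\big| \le \frac{p-1}{2}$.
   Context: $\mathbb{Z}_p=\{0,\dots,p-1\}$ under addition mod $p$. Sumset: $\sum_{i=1}^k A_i=\{a_1+\dots+a_k\bmod p : a_i\in A_i\}$. For an integer $1\le D\le p-1$ and $b\in\{0,\dots,D-1\}$, the $D$-AP with base $b$ is $A_{(b)}=\{b+iD : i\text{ integer},\ 0\le i\le\lfloor (p-1-b)/D\rfloor\}\subseteq\mathbb{Z}_p$; a $D$-AP is any set of this form. *)

(* Z_p is represented by 'I_p (residues 0..p-1), addition mod p. *)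
From mathcomp Require Import all_boot.
Set Implicit Arguments. Unset Strict Implicit. Unset Printing Implicit Defensive.

Definition ceil_div (m n : nat) : nat := (m + n - 1) %/ n.

Definition DAP (p D b : nat) : {set 'I_p} :=
  [set x : 'I_p | [exists i : 'I_p, (i <= (p - 1 - b) %/ D) && (val x == b + i * D)]].

Definition is_DAP (p D : nat) (A : {set 'I_p}) : Prop :=
  exists2 b, b < D & A = DAP p D b.

Definition sumset (p k : nat) (A : 'I_k -> {set 'I_p}) : {set 'I_p} :=
  [set x : 'I_p | [exists a : {ffun 'I_k -> 'I_p},
      [forall i, a i \in A i] && (val x == (\sum_(i < k) val (a i)) %% p)]].
Arguments is_DAP : clear implicits.
Arguments DAP : clear implicits.

From mathcomp Require Import all_boot.
From mathcomp Require Import zify.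

Set Implicit Arguments.
Unset Strict Implicit.
Unset Printing Implicit Defensive.

(* A D-AP with base b has at most q + 1 elements, q := (p - 1) %/ D, and adding
   k of them adds their bases and their step counts: the sumset sits inside a
   single progression B + j D (j <= k q), so it has at most k q + 1 elements.
   The choice D >= 2 k p / (p - 3) makes 2 k q <= 2 k (p - 1) / D < p - 3. *)

Lemma ceil_div_mul_ge m n : 0 < n -> m <= ceil_div m n * n.
Proof.
move=> n_gt0; rewrite /ceil_div.
have := divn_eq (m + n - 1) n; have := ltn_pmod (m + n - 1) n_gt0.
lia.
Qed.

Section SumsetOfDAPs.

Variables (p D : nat).
Hypothesis p_gt0 : 0 < p.

Lemma DAP_memP b (x : 'I_p) :
  x \in DAP p D b -> exists2 i, i <= (p - 1 - b) %/ D & val x = b + i * D.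
Proof. by rewrite inE => /existsP [i /andP [le_i /eqP x_eq]]; exists i. Qed.

Definition AP_mod (a n : nat) : {set 'I_p} :=
  [set Ordinal (ltn_pmod (a + val j * D) p_gt0) | j : 'I_n].

Variables (k : nat) (b : 'I_k -> nat) (A : 'I_k -> {set 'I_p}).
Hypothesis A_DAP : forall i, A i = DAP p D (b i).

Lemma sumset_DAP_subset :
  sumset A \subset AP_mod (\sum_i b i) (\sum_i (p - 1 - b i) %/ D).+1.
Proof.
apply/subsetP => x; rewrite inE => /existsP [a /andP [/forallP a_in /eqP x_eq]].
have steps i : exists j : nat, j <= (p - 1 - b i) %/ D /\ val (a i) = b i + j * D.
  by have := a_in i; rewrite A_DAP => /DAP_memP [j ? ?]; exists j.
have [j j_spec] := fin_all_exists steps.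
have sum_j : \sum_i j i < (\sum_i (p - 1 - b i) %/ D).+1.
  by rewrite ltnS; apply: leq_sum => i _; case: (j_spec i).
apply/imsetP; exists (Ordinal sum_j) => //; apply: val_inj => /=.
rewrite x_eq big_distrl -big_split /=; congr (_ %% p).
by apply: eq_bigr => i _; case: (j_spec i).
Qed.

Lemma card_sumset_DAP : #|sumset A| <= k * ((p - 1) %/ D) + 1.
Proof.
rewrite addn1; apply: leq_trans (subset_leq_card sumset_DAP_subset) _.
apply: leq_trans (leq_imset_card _ _) _; rewrite card_ord ltnS.
rewrite -[k in k * _]card_ord -sum_nat_const.
by apply: leq_sum => i _; apply: leq_div2r; apply: leq_subr.
Qed.

End SumsetOfDAPs.

Lemma ceil_div_step_bound p k :
  3 < p -> 2 * (k * ((p - 1) %/ ceil_div (2 * k * p) (p - 3)) + 1) <= p - 1.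
Proof.
move=> p_gt3; set D := ceil_div _ _; set q := (p - 1) %/ D.
have D_ge : 2 * k * p <= D * (p - 3) by apply: ceil_div_mul_ge; lia.
have qD_le : q * D <= p - 1 by apply: leq_divM.
have : 2 * k * p * q <= (p - 1) * (p - 3) by nia.
nia.
Qed.

Theorem lemma3p2 (p k : nat) :
  prime p -> 5 < p -> 0 < k -> 4 * k < p ->
  let D := ceil_div (2 * k * p) (p - 3) in
  D < p /\
  (forall A : 'I_k -> {set 'I_p}, (forall i, is_DAP p D (A i)) ->
     2 * #|sumset A| <= p - 1).
Proof.
move=> _ p_gt5 _ lt_4k_p D; split.
  by rewrite /D /ceil_div ltn_divLR; nia.
move=> A A_DAP.
have A_base i : exists bi, A i = DAP p D bi.
  by case: (A_DAP i) => bi _ ->; exists bi.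
have [b b_spec] := fin_all_exists A_base.
have p_gt0 : 0 < p by lia.
have card_le := card_sumset_DAP p_gt0 b_spec.
have step_le : 2 * (k * ((p - 1) %/ D) + 1) <= p - 1 by apply: ceil_div_step_bound; lia.
lia.
Qed.
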